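(* Let $\mathbb F$ be an algebraically closed field of characteristic not two. Every finite-dimensional associative algebra $R$ (without identity) over $\mathbb F$ with $R^3=0$ and $\dim R^2=2$ is isomorphic to exactly one algebra on $\mathbb F^{2+n}$, for some $n\ge 2$, with multiplication \[ uv=\left(u^T\begin{bmatrix}0_2&0\\0&A\end{bmatrix}v,\ u^T\begin{bmatrix}0_2&0\\0&B\end{bmatrix}v,\ 0,\dots,0\right)^T \] given by $n$-by-$n$ matrices $A$ and $B$ that are linearly independent (i.e. $aA+bB=0$ implies $a=b=0$). The pair $(A,B)$ is determined by $R$ uniquely up to congruence $(A,B)\mapsto(S^TAS,S^TBS)$ ($S$ nonsingular) and linear substitutions $(A,B)\mapsto(r_{11}A+r_{12}B,\ r_{21}A+r_{22}B)$ with $[r_{ij}]$ nonsingular.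
   Context: An algebra without identity is a finite-dimensional vector space $R$ over $\mathbb F$ with a bilinear associative multiplication; $R^2$ (resp. $R^3$) is the subspace spanned by all products $uv$ (resp. $uvw$). Here $0_2$ is the $2\times 2$ zero matrix and vectors of $\mathbb F^{2+n}$ are columns. *)

From HB Require Import structures.
From mathcomp Require Import all_boot all_order all_algebra.
Set Implicit Arguments. Unset Strict Implicit. Unset Printing Implicit Defensive.
Import GRing.Theory.
Local Open Scope ring_scope.

Definition is_assoc_algebra (F : fieldType) (V : vectType F) (mul : V -> V -> V) :=
  [/\ (forall (a : F) (u v w : V), mul (a *: u + v) w = a *: mul u w + mul v w),
      (forall (a : F) (u v w : V), mul w (a *: u + v) = a *: mul w u + mul w v) &
      (forall u v w : V, mul (mul u v) w = mul u (mul v w))].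

Definition is_R2 (F : fieldType) (V : vectType F) (mul : V -> V -> V)
  (U : {vspace V}) :=
  (forall u v, mul u v \in U) /\
  (forall W : {vspace V}, (forall u v, mul u v \in W) -> (U <= W)%VS).

Definition R3_zero (F : fieldType) (V : vectType F) (mul : V -> V -> V) :=
  forall u v w : V, mul (mul u v) w = 0.

Definition alg_iso (F : fieldType) (V1 V2 : vectType F)
  (mul1 : V1 -> V1 -> V1) (mul2 : V2 -> V2 -> V2) :=
  exists f : V1 -> V2,
    [/\ (forall (a : F) (u v : V1), f (a *: u + v) = a *: f u + f v),
        bijective f &
        (forall u v : V1, f (mul1 u v) = mul2 (f u) (f v))].

Definition blk (F : fieldType) (n : nat) (A : 'M[F]_n) : 'M[F]_(2 + n) :=
  block_mx (0 : 'M[F]_(2, 2)) 0 0 A.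

Definition ABmul (F : fieldType) (n : nat) (A B : 'M[F]_n)
  (u v : 'cV[F]_(2 + n)) : 'cV[F]_(2 + n) :=
  \col_(i < 2 + n)
    (if (i : nat) == 0%N then (u^T *m blk A *m v) ord0 ord0
     else if (i : nat) == 1%N then (u^T *m blk B *m v) ord0 ord0
     else 0).

Definition lin_indep2 (F : fieldType) (n : nat) (A B : 'M[F]_n) :=
  forall a b : F, a *: A + b *: B = 0 -> a = 0 /\ b = 0.

Definition i0 : 'I_2 := ord0.
Definition i1 : 'I_2 := ord_max.

(* (A', B') is obtained from (A, B) by a congruence (S nonsingular) and a
   nonsingular linear substitution r (these operations commute, so every
   composite of them has this form). *)
Definition pair_equiv (F : fieldType) (n : nat) (A B A' B' : 'M[F]_n) :=
  exists (S : 'M[F]_n) (r : 'M[F]_2),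
    [/\ S \in unitmx, r \in unitmx,
        A' = S^T *m (r i0 i0 *: A + r i0 i1 *: B) *m S &
        B' = S^T *m (r i1 i0 *: A + r i1 i1 *: B) *m S].

Definition pair_equiv_dep (F : fieldType) (n n' : nat) (A B : 'M[F]_n)
  (A' B' : 'M[F]_n') :=
  exists e : n' = n, pair_equiv A B (castmx (e, e) A') (castmx (e, e) B').

From HB Require Import structures.
From mathcomp Require Import all_boot all_order all_algebra.
Import GRing.Theory.
Set Implicit Arguments. Unset Strict Implicit. Unset Printing Implicit Defensive.
Local Open Scope ring_scope.

(* Since R^3 = 0, a linear map killing all products kills R^2; applied to the
   left and right multiplications this shows that R^2 annihilates R.  In a
   basis of R adapted to R = R^2 (+) C the products thus only have
   R^2-coordinates, given by two bilinear forms A, B on C, which are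
   independent because R^2 is 2-dimensional.  Conversely, an isomorphism
   between two such algebras is an invertible matrix [P Q; D S] on F^(2+n).
   Evaluating it on products of vectors of 0 (+) F^n gives D = 0 (A and B are
   independent) and shows that (S^T A' S, S^T B' S) is the substitution of
   (A, B) by P. *)

Lemma ord2_cases (i : 'I_2) : i = i0 \/ i = i1.
Proof. by case: i => [[|[|//]]] Hi; [left|right]; apply: val_inj. Qed.

Lemma mulmx_cV2 (F : fieldType) m (P : 'M[F]_(m, 2)) (q : 'cV[F]_2) i :
  (P *m q) i 0 = P i i0 * q i0 0 + P i i1 * q i1 0.
Proof.
by rewrite mxE !big_ord_recl big_ord0 addr0 (_ : lift ord0 ord0 = i1) //; apply: val_inj.
Qed.

Section BilinearForms.
Variables (F : fieldType) (n : nat).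
Implicit Types (M N A B S : 'M[F]_n) (x y : 'cV[F]_n).

Lemma bilin_delta M i j :
  ((delta_mx i (0 : 'I_1))^T *m M *m delta_mx j (0 : 'I_1)) 0 0 = M i j.
Proof. by rewrite trmx_delta -rowE -colE !mxE. Qed.

Lemma eq_bilin_mx M N :
  (forall x y, (x^T *m M *m y) 0 0 = (x^T *m N *m y) 0 0) -> M = N.
Proof. by move=> eqMN; apply/matrixP => i j; rewrite -bilin_delta eqMN bilin_delta. Qed.

Lemma bilin_comb a b A B x y :
  (x^T *m (a *: A + b *: B) *m y) 0 0 =
  a * (x^T *m A *m y) 0 0 + b * (x^T *m B *m y) 0 0.
Proof. by rewrite mulmxDr mulmxDl -!scalemxAr -!scalemxAl !mxE. Qed.

Lemma bilin_congr S M x y :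
  x^T *m (S^T *m M *m S) *m y = (S *m x)^T *m M *m (S *m y).
Proof. by rewrite trmx_mul !mulmxA. Qed.

Lemma congrmxK S M : S \in unitmx -> (invmx S)^T *m (S^T *m M *m S) *m invmx S = M.
Proof.
move=> Su; rewrite trmx_inv !mulmxA mulVmx ?unitmx_tr // mul1mx.
by rewrite -mulmxA mulmxV // mulmx1.
Qed.

Definition pair_form A B x y : 'cV[F]_2 :=
  \col_i (x^T *m (if i == i0 then A else B) *m y) 0 0.

Lemma pair_form_i0 A B x y : pair_form A B x y i0 0 = (x^T *m A *m y) 0 0.
Proof. by rewrite mxE. Qed.

Lemma pair_form_i1 A B x y : pair_form A B x y i1 0 = (x^T *m B *m y) 0 0.
Proof. by rewrite mxE. Qed.

Lemma pair_form_inj A B A' B' :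
  (forall x y, pair_form A B x y = pair_form A' B' x y) -> A = A' /\ B = B'.
Proof.
move=> eqAB; split; apply: eq_bilin_mx => x y.
  by rewrite -(pair_form_i0 A B) -(pair_form_i0 A' B') eqAB.
by rewrite -(pair_form_i1 A B) -(pair_form_i1 A' B') eqAB.
Qed.

Lemma pair_form_congr S A B x y :
  pair_form (S^T *m A *m S) (S^T *m B *m S) x y = pair_form A B (S *m x) (S *m y).
Proof.
by apply/matrixP => i j; rewrite mxE [RHS]mxE; case: (i == i0); rewrite bilin_congr.
Qed.

Lemma pair_form_subst (P : 'M[F]_2) A B x y :
  P *m pair_form A B x y =
  pair_form (P i0 i0 *: A + P i0 i1 *: B) (P i1 i0 *: A + P i1 i1 *: B) x y.
Proof.
apply/matrixP => i j; rewrite (ord1 j) mulmx_cV2 pair_form_i0 pair_form_i1.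
by case: (ord2_cases i) => ->; rewrite ?pair_form_i0 ?pair_form_i1 bilin_comb.
Qed.

Lemma pair_equivP A B A' B' :
  pair_equiv A B A' B' <->
  exists S (P : 'M[F]_2), [/\ S \in unitmx, P \in unitmx &
    forall x y, pair_form A' B' (S *m x) (S *m y) = P *m pair_form A B x y].
Proof.
split=> [[S [P [Su Pu -> ->]]] | [S [P [Su Pu eqAB]]]].
  exists (invmx S), P; split; rewrite ?unitmx_inv // => x y.
  by rewrite pair_form_congr !mulKVmx // pair_form_subst.
have [eqA eqB] : S^T *m A' *m S = P i0 i0 *: A + P i0 i1 *: B /\
                 S^T *m B' *m S = P i1 i0 *: A + P i1 i1 *: B.
  by apply: pair_form_inj => x y; rewrite pair_form_congr eqAB pair_form_subst.
exists (invmx S), P; split; rewrite ?unitmx_inv //.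
  by rewrite -eqA congrmxK.
by rewrite -eqB congrmxK.
Qed.

Lemma pair_form_ann m A B (D : 'M[F]_(m, 2)) :
  lin_indep2 A B -> (forall x y, D *m pair_form A B x y = 0) -> D = 0.
Proof.
move=> indAB DAB; apply/matrixP => k i; rewrite mxE.
have [Dk0 Dk1] : D k i0 = 0 /\ D k i1 = 0.
  apply: indAB; apply: eq_bilin_mx => x y.
  rewrite bilin_comb -(pair_form_i0 A B) -(pair_form_i1 A B) -mulmx_cV2 DAB.
  by rewrite mulmx0 mul0mx !mxE.
by case: (ord2_cases i) => ->.
Qed.

Lemma lin_indep2_ge2 A B : lin_indep2 A B -> (2 <= n)%N.
Proof.
have one_neq0 : (1 : F) <> 0 by apply/eqP; rewrite oner_eq0.
case: n A B => [|[|k]] A B indAB //.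
  by have [/one_neq0] : (1 : F) = 0 /\ (0 : F) = 0 by apply: indAB; rewrite flatmx0.
have A0 : A = 0.
  have [_ /eqP] : B 0 0 = 0 /\ - A 0 0 = 0.
    by apply: indAB; apply/matrixP => i j; rewrite !ord1 !mxE mulNr mulrC subrr.
  by rewrite oppr_eq0 => /eqP A00; apply/matrixP => i j; rewrite !ord1 A00 mxE.
by have [/one_neq0] : (1 : F) = 0 /\ (0 : F) = 0
  by apply: indAB; rewrite A0 scaler0 scale0r addr0.
Qed.

End BilinearForms.

Section ABmulIsomorphisms.
Variables (F : fieldType) (n : nat).
Implicit Types (A B S : 'M[F]_n) (P : 'M[F]_2).

Lemma blk_bilin A (u v : 'cV[F]_(2 + n)) :
  u^T *m blk A *m v = (dsubmx u)^T *m A *m dsubmx v.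
Proof.
rewrite -[u]vsubmxK -[v]vsubmxK /blk tr_col_mx mul_row_block mul_row_col.
by rewrite !col_mxKd !mulmx0 !add0r mul0mx add0r.
Qed.

Lemma ABmulE A B u v :
  ABmul A B u v = col_mx (pair_form A B (dsubmx u) (dsubmx v)) 0.
Proof.
apply/matrixP => i j; rewrite (ord1 j) [LHS]mxE [RHS]mxE.
case: splitP => k ->; last by rewrite [RHS]mxE.
by case: (ord2_cases k) => -> /=; rewrite ?pair_form_i0 ?pair_form_i1 blk_bilin.
Qed.

Lemma block_intertwining_relations A B A' B' P Q (D : 'M[F]_(n, 2)) S :
  let G := block_mx P Q D S in
  (forall u v, G *m ABmul A B u v = ABmul A' B' (G *m u) (G *m v)) ->
  forall x y, pair_form A' B' (S *m x) (S *m y) = P *m pair_form A B x y /\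
              D *m pair_form A B x y = 0.
Proof.
move=> G GAB x y; have := GAB (col_mx 0 x) (col_mx 0 y).
rewrite !ABmulE !col_mxKd !mul_block_col !col_mxKd !mulmx0 !addr0 !add0r.
by case/eq_col_mx => -> <-.
Qed.

Lemma diag_block_intertwining A B A' B' P S :
  let G := block_mx P 0 0 S in
  (forall x y, pair_form A' B' (S *m x) (S *m y) = P *m pair_form A B x y) ->
  forall u v, G *m ABmul A B u v = ABmul A' B' (G *m u) (G *m v).
Proof.
move=> G eqAB u v; have dsubG w : dsubmx (G *m w) = S *m dsubmx w.
  by rewrite -{1}[w]vsubmxK mul_block_col col_mxKd mul0mx add0r.
by rewrite !ABmulE !dsubG eqAB mul_block_col !mulmx0 mul0mx !addr0.
Qed.

End ABmulIsomorphisms.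

Section AlgebraIsomorphisms.
Variable F : fieldType.

Lemma alg_iso_sym (V1 V2 : vectType F) (mul1 : V1 -> V1 -> V1) (mul2 : V2 -> V2 -> V2) :
  alg_iso mul1 mul2 -> alg_iso mul2 mul1.
Proof.
case=> f [fL [g fK gK] fM]; exists g; split.
- by move=> a u v; apply: (can_inj fK); rewrite fL !gK.
- by exists f.
- by move=> u v; apply: (can_inj fK); rewrite fM !gK.
Qed.

Lemma alg_iso_trans (V1 V2 V3 : vectType F) (mul1 : V1 -> V1 -> V1)
  (mul2 : V2 -> V2 -> V2) (mul3 : V3 -> V3 -> V3) :
  alg_iso mul1 mul2 -> alg_iso mul2 mul3 -> alg_iso mul1 mul3.
Proof.
case=> f [fL fB fM] [g [gL gB gM]]; exists (g \o f); split.
- by move=> a u v; rewrite /= fL gL.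
- exact: bij_comp.
- by move=> u v; rewrite /= fM gM.
Qed.

Lemma linear_mulmx m p (g : 'cV[F]_m -> 'cV[F]_p) :
  (forall a u v, g (a *: u + v) = a *: g u + g v) -> exists G, g =1 mulmx G.
Proof.
move=> gL; have g0 : g 0 = 0.
  by apply: (addIr (g 0)); rewrite add0r -{1}(scale1r (g 0)) -gL scale1r addr0.
have gZ a u : g (a *: u) = a *: g u by rewrite -[a *: u]addr0 gL g0 addr0.
have gD u v : g (u + v) = g u + g v by have := gL 1 u v; rewrite !scale1r.
exists (\matrix_(i, j) g (delta_mx j 0) i 0) => x.
rewrite {1}[x]matrix_sum_delta (big_morph g gD g0).
apply/matrixP => i j; rewrite (ord1 j) summxE mxE; apply: eq_bigr => k _.
by rewrite big_ord1 gZ !mxE mulrC.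
Qed.

Lemma mx_inverse_dim m p (G : 'M[F]_(p, m)) (H : 'M[F]_(m, p)) :
  H *m G = 1%:M -> G *m H = 1%:M -> m = p.
Proof.
have le_inv q r (M : 'M[F]_(q, r)) N : M *m N = 1%:M -> (q <= r)%N.
  move=> MN; rewrite -(mxrank1 F q) -MN.
  exact: leq_trans (mxrankM_maxl _ _) (rank_leq_col _).
by move=> HG GH; apply/eqP; rewrite eqn_leq (le_inv _ _ _ _ HG) (le_inv _ _ _ _ GH).
Qed.

Lemma cancel_mulmx m p (G : 'M[F]_(p, m)) (H : 'M[F]_(m, p)) :
  cancel (@mulmx _ _ _ 1 G) (@mulmx _ _ _ 1 H) -> H *m G = 1%:M.
Proof.
move=> GK; apply/matrixP => i j; move/matrixP/(_ i 0): (GK (delta_mx j 0)).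
by rewrite mulmxA -colE !mxE eqxx andbT eq_sym.
Qed.

Lemma alg_iso_mulmx m p (mul1 : 'cV[F]_m -> 'cV[F]_m -> 'cV[F]_m)
    (mul2 : 'cV[F]_p -> 'cV[F]_p -> 'cV[F]_p) :
  alg_iso mul1 mul2 ->
  exists (G : 'M[F]_(p, m)) (H : 'M[F]_(m, p)), [/\ H *m G = 1%:M, G *m H = 1%:M &
    forall u v, G *m mul1 u v = mul2 (G *m u) (G *m v)].
Proof.
case=> g [gL [h gK hK] gM].
have hL a u v : h (a *: u + v) = a *: h u + h v.
  by apply: (can_inj gK); rewrite gL !hK.
have [G gG] := linear_mulmx gL; have [H hH] := linear_mulmx hL.
exists G, H; split.
- by apply: cancel_mulmx => x; rewrite -gG -hH gK.
- by apply: cancel_mulmx => x; rewrite -gG -hH hK.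
- by move=> u v; rewrite -!gG gM.
Qed.

End AlgebraIsomorphisms.

Section PairEquivalence.
Variable F : fieldType.

Lemma alg_iso_of_pair_equiv n (A B A' B' : 'M[F]_n) :
  pair_equiv A B A' B' -> alg_iso (ABmul A B) (ABmul A' B').
Proof.
case/pair_equivP => S [P [Su Pu eqAB]].
have Gu : block_mx P 0 0 S \in unitmx.
  by rewrite unitmxE det_ublock unitrM -!unitmxE Pu Su.
exists (mulmx (block_mx P 0 0 S)); split.
- by move=> a u v; rewrite mulmxDr scalemxAr.
- by exists (mulmx (invmx (block_mx P 0 0 S))) => x; [exact: mulKmx | exact: mulKVmx].
- exact: diag_block_intertwining.
Qed.

Lemma pair_equiv_of_alg_iso n n' (A B : 'M[F]_n) (A' B' : 'M[F]_n') :
  lin_indep2 A B -> alg_iso (ABmul A B) (ABmul A' B') -> pair_equiv_dep A B A' B'.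
Proof.
move=> indAB /alg_iso_mulmx [G [H [HG GH GAB]]].
have /addnI eq_n := mx_inverse_dim HG GH; subst n'.
exists erefl; rewrite !castmx_id; apply/pair_equivP.
have [Gu _] := mulmx1_unit GH; clear HG GH.
rewrite -[G]submxK in Gu GAB.
move: (ulsubmx G) (ursubmx G) (dlsubmx G) (drsubmx G) Gu GAB => P Q D S Gu GAB.
have {}GAB := block_intertwining_relations GAB.
have D0 : D = 0 := pair_form_ann indAB (fun x y => (GAB x y).2).
move: Gu; rewrite D0 unitmxE det_ublock unitrM -!unitmxE => /andP[Pu Su].
by exists S, P; split=> // x y; rewrite (GAB x y).1.
Qed.

End PairEquivalence.

Section Existence.
Variables (F : fieldType) (V : vectType F) (mul : V -> V -> V).
Hypotheses (mulP : is_assoc_algebra mul) (mul3_0 : R3_zero mul).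

Definition lmul u v := mul u v.
Definition rmul w u := mul u w.

Fact lmul_is_linear u : linear (lmul u).
Proof. by case: mulP => _ mulZDr _ a v w; apply: mulZDr. Qed.

Fact rmul_is_linear w : linear (rmul w).
Proof. by case: mulP => mulZDl _ _ a u v; apply: mulZDl. Qed.

HB.instance Definition _ u := GRing.isLinear.Build F V V *:%R (lmul u) (lmul_is_linear u).
HB.instance Definition _ w := GRing.isLinear.Build F V V *:%R (rmul w) (rmul_is_linear w).

Lemma mulZl a u w : mul (a *: u) w = a *: mul u w.
Proof. exact: (linearZ_LR (rmul w)). Qed.

Lemma mulZr a u w : mul w (a *: u) = a *: mul w u.
Proof. exact: (linearZ_LR (lmul w)). Qed.

Lemma mul_suml I (r : seq I) (P : pred I) (f : I -> V) w :
  mul (\sum_(i <- r | P i) f i) w = \sum_(i <- r | P i) mul (f i) w.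
Proof. exact: (linear_sum (rmul w)). Qed.

Lemma mul_sumr I (r : seq I) (P : pred I) (f : I -> V) w :
  mul w (\sum_(i <- r | P i) f i) = \sum_(i <- r | P i) mul w (f i).
Proof. exact: (linear_sum (lmul w)). Qed.

Variable U : {vspace V}.
Hypotheses (U_R2 : is_R2 mul U) (dimU : \dim U = 2%N).

Lemma R2_sub_lker (W : vectType F) (g : 'Hom(V, W)) :
  (forall u v, g (mul u v) = 0) -> (U <= lker g)%VS.
Proof. by move=> g0; apply: U_R2.2 => u v; rewrite memv_ker g0. Qed.

Lemma mulR2x u x : u \in U -> mul u x = 0.
Proof.
have kill v w : linfun (rmul x) (mul v w) = 0 by rewrite lfunE /= /rmul mul3_0.
by move/(subvP (R2_sub_lker kill)); rewrite memv_ker lfunE => /eqP.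
Qed.

Lemma mulxR2 x u : u \in U -> mul x u = 0.
Proof.
have kill v w : linfun (lmul x) (mul v w) = 0.
  by case: mulP => _ _ mulA; rewrite lfunE /= /lmul -mulA mul3_0.
by move/(subvP (R2_sub_lker kill)); rewrite memv_ker lfunE => /eqP.
Qed.

Let n := \dim U^C.

Fact adapted_basis_size : size (vbasis U ++ vbasis U^C) == (2 + n)%N.
Proof. by rewrite size_cat !size_tuple dimU. Qed.

Let X := Tuple adapted_basis_size.

Lemma adapted_basis : basis_of fullv X.
Proof.
have spanX : <<X>>%VS = fullv.
  by rewrite span_cat !(span_basis (vbasisP _)) addv_complf.
rewrite /basis_of /free spanX size_tuple /n dimv_compl dimU subnKC ?eqxx //.
by rewrite (leq_trans _ (dimvS (subvf U))) ?dimU.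
Qed.

Lemma adapted_basis_R2 i : (i < 2)%N -> X`_i \in U.
Proof.
rewrite -{1}dimU => ltiU; rewrite nth_cat size_tuple ltiU.
by apply/vbasis_mem/mem_nth; rewrite size_tuple.
Qed.

Lemma coord_R2 u (k : 'I_(2 + n)) : u \in U -> (2 <= k)%N -> coord X k u = 0.
Proof.
move=> /(coord_basis (vbasisP U)) -> le2k; rewrite linear_sum big1 // => i _.
have lti2 : (i < 2)%N by rewrite -[2%N]dimU ltn_ord.
have lti : (i < 2 + n)%N by rewrite (leq_trans lti2) ?leq_addr.
have /negPf ne_ik : Ordinal lti != k.
  by apply: contraTneq le2k => <-; rewrite -ltnNge.
have Xi : (vbasis U)`_i = X`_(Ordinal lti) by rewrite /= nth_cat size_tuple ltn_ord.
by rewrite linearZ /= Xi coord_free ?(basis_free adapted_basis) // ne_ik mulr0.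
Qed.

Definition coordv x : 'cV[F]_(2 + n) := \col_i coord X i x.

Definition struct_mx k : 'M[F]_(2 + n) := \matrix_(i, j) coord X k (mul X`_i X`_j).

Lemma coord_adapted x : x = \sum_i coord X i x *: X`_i.
Proof. exact: coord_basis adapted_basis (memvf x). Qed.

Lemma coord_mul k x y :
  coord X k (mul x y) = ((coordv x)^T *m struct_mx k *m coordv y) 0 0.
Proof.
rewrite {1}(coord_adapted x) {1}(coord_adapted y) mul_suml linear_sum [RHS]mxE.
under [RHS]eq_bigr do rewrite mxE mulr_suml.
rewrite [RHS]exchange_big /=; apply: eq_bigr => i _.
rewrite mulZl mul_sumr linearZ linear_sum /= mulr_sumr.
by apply: eq_bigr => j _; rewrite mulZr linearZ /= !mxE [RHS]mulrAC -mulrA.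
Qed.

Lemma struct_mx_blk k : blk (drsubmx (struct_mx k)) = struct_mx k.
Proof.
have R2_mul (i j : 'I_(2 + n)) : (i < 2)%N || (j < 2)%N -> mul X`_i X`_j = 0.
  by case/orP => /adapted_basis_R2 XU; [exact: mulR2x | exact: mulxR2].
rewrite /blk -[RHS]submxK; congr block_mx; apply/matrixP => i j;
  by rewrite !mxE R2_mul ?linear0 //= ltn_ord ?orbT.
Qed.

Definition formA := drsubmx (struct_mx (lshift n i0)).
Definition formB := drsubmx (struct_mx (lshift n i1)).

Lemma coordv_mul x y : coordv (mul x y) = ABmul formA formB (coordv x) (coordv y).
Proof.
apply/matrixP => k j; rewrite (ord1 j) ABmulE -[k]splitK [LHS]mxE.
case: (split k) => i /=.
  rewrite col_mxEu coord_mul -struct_mx_blk blk_bilin.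
  by case: (ord2_cases i) => ->; rewrite ?pair_form_i0 ?pair_form_i1.
by rewrite col_mxEd mxE coord_R2 ?(U_R2.1 x y) ?leq_addr.
Qed.

Lemma lin_indep2_forms : lin_indep2 formA formB.
Proof.
move=> a b abAB.
pose phi : 'Hom(V, F^o) :=
  a *: linfun (coord X (lshift n i0) : {linear V -> F^o}) +
  b *: linfun (coord X (lshift n i1) : {linear V -> F^o}).
have phiE u : phi u = a * coord X (lshift n i0) u + b * coord X (lshift n i1) u.
  by rewrite add_lfunE !scale_lfunE !lfunE.
have phi_mul u v : phi (mul u v) = 0.
  have coordE k w : coord X k w = coordv w k 0 by rewrite mxE.
  rewrite phiE !coordE coordv_mul ABmulE !col_mxEu pair_form_i0 pair_form_i1.
  by rewrite -bilin_comb abAB mulmx0 mul0mx mxE.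
have coordX (i j : 'I_2) : coord X (lshift n i) X`_(lshift n j) = (j == i)%:R.
  by rewrite coord_free ?(basis_free adapted_basis) // (inj_eq (@lshift_inj _ _)).
have phiX (i : 'I_2) : phi X`_(lshift n i) = 0.
  apply/eqP; rewrite -memv_ker; apply: (subvP (R2_sub_lker phi_mul)).
  by apply: adapted_basis_R2; exact: (ltn_ord i).
by move: (phiX i0) (phiX i1); rewrite !phiE !coordX /= !mulr1 !mulr0 addr0 add0r.
Qed.

Lemma coordv_alg_iso : alg_iso mul (ABmul formA formB).
Proof.
exists coordv; split.
- by move=> a u v; apply/matrixP => i j; rewrite !mxE linearP.
- exists (fun c : 'cV_(2 + n) => \sum_i c i 0 *: X`_i).
    by move=> x; rewrite {2}(coord_adapted x); apply: eq_bigr => i _; rewrite mxE.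
  move=> c; apply/matrixP => k j.
  by rewrite (ord1 j) mxE coord_sum_free ?(basis_free adapted_basis).
- exact: coordv_mul.
Qed.

Lemma ABmul_model_exists :
  exists m (A B : 'M[F]_m), [/\ (2 <= m)%N, lin_indep2 A B & alg_iso mul (ABmul A B)].
Proof.
exists n, formA, formB; split; last exact: coordv_alg_iso.
  exact: lin_indep2_ge2 lin_indep2_forms.
exact: lin_indep2_forms.
Qed.

End Existence.

Theorem lemma3p3 (F : fieldType) (Fclosed : GRing.closed_field_axiom F)
  (Fchar : (2%:R : F) != 0)
  (V : vectType F) (mul : V -> V -> V) (Halg : is_assoc_algebra mul)
  (H3 : R3_zero mul)
  (H2 : exists U : {vspace V}, is_R2 mul U /\ \dim U = 2%N) :
  (exists (n : nat) (A B : 'M[F]_n),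
     [/\ (2 <= n)%N, lin_indep2 A B & alg_iso mul (ABmul A B)]) /\
  (forall (n : nat) (A B : 'M[F]_n) (n' : nat) (A' B' : 'M[F]_n'),
     lin_indep2 A B -> lin_indep2 A' B' -> alg_iso mul (ABmul A B) ->
     (alg_iso mul (ABmul A' B') <-> pair_equiv_dep A B A' B')).
Proof.
have [U [U_R2 dimU]] := H2.
split; first exact: (ABmul_model_exists Halg H3 U_R2 dimU).
move=> n A B n' A' B' indAB _ isoAB; split=> [isoAB' | [e]].
  exact: pair_equiv_of_alg_iso indAB (alg_iso_trans (alg_iso_sym isoAB) isoAB').
subst n'; rewrite !castmx_id => /alg_iso_of_pair_equiv.
exact: alg_iso_trans.
Qed.
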